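(* Let $U\subseteq\mathcal{B}$ be a maximal avoidable set containing an element $(a,0)$ with $a\ge 1$. Then there is an odd integer $d<a$ such that $U=\{(a,0),(0,0)\}\cup\{(c,d)\in\mathcal{B}\mid \max\{c,c+d\}<a\}$.
   Context: The bicyclic inverse semigroup is $\mathcal{B}=\{(a,b)\in\mathbb{Z}\times\mathbb{Z}\mid a\ge 0,\ a+b\ge 0\}$ with multiplication $(a,b)(c,d)=(\max\{c+d,a\}-d,\ b+d)$. A subset $U\subseteq\mathcal{B}$ is called avoidable if $\mathcal{B}$ can be partitioned into two subsets $A$ and $B$ such that no element of $U$ can be written as a product $xy$ of two distinct elements $x\neq y$ both in $A$, or both in $B$. A maximal avoidable set is an avoidable set not properly contained in any other avoidable subset of $\mathcal{B}$. *)

From Stdlib Require Import ZArith.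
Open Scope Z_scope.

(* The bicyclic inverse semigroup B = {(a,b) in Z x Z | a >= 0, a + b >= 0}. *)
Definition inB (p : Z * Z) : Prop := 0 <= fst p /\ 0 <= fst p + snd p.

Definition bmul (x y : Z * Z) : Z * Z :=
  (Z.max (fst y + snd y) (fst x) - snd y, snd x + snd y).

Definition subsetB (U : Z * Z -> Prop) : Prop := forall p, U p -> inB p.

Definition avoidable (U : Z * Z -> Prop) : Prop :=
  subsetB U /\
  exists A : Z * Z -> Prop,
    forall x y, inB x -> inB y -> x <> y ->
      (A x <-> A y) -> ~ U (bmul x y).

Definition maximal_avoidable (U : Z * Z -> Prop) : Prop :=
  avoidable U /\
  forall V : Z * Z -> Prop, avoidable V -> (forall p, U p -> V p) ->
    forall p, V p -> U p.

(** For odd [d], the set [{(a,0), (0,0)} ∪ {(c,d) ∈ B | max(c, c+d) < a}] is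
    avoidable: colour [(x, 0)] according to whether [x = a], and colour
    [(x, k)] with [k <> 0] by a 2-colouring of the nonzero integers in which
    [k] and [-k], and [k] and [d - k], always get different colours (the two
    reflections have no fixed point because [d] is odd).

    Conversely, let [A] be a partition witnessing that [U] is avoidable; call
    [x] and [y] opposite when they lie in different parts.  Whenever [x <> y]
    and [xy ∈ U], [x] and [y] are opposite, so [U] cannot contain an odd cycle
    of such products.  Since [(0,0)] is the identity of [B], every element of
    [U] other than [(0,0)] is opposite to [(0,0)], which makes [U ∖ {(0,0)}]
    free of products of distinct elements; this bounds the other elements of
    [U] by [a].  Small explicit odd cycles then show that their second
    coordinates are odd and all equal.  Maximality turns the inclusion into an
    equality. *)

From Stdlib Require Import ZArith Lia Classical.
Open Scope Z_scope.

Definition odd_colour (d k : Z) : bool :=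
  let r := k mod Z.abs d in
  if r =? 0 then 0 <? k * d else 2 * r <? Z.abs d.

Lemma mod_abs_self (d : Z) : d <> 0 -> d mod Z.abs d = 0.
Proof.
  intros Hd. apply Z.mod_divide; [lia|]. apply Z.divide_abs_l, Z.divide_refl.
Qed.

Lemma odd_colour_self (d : Z) : d <> 0 -> odd_colour d d = true.
Proof.
  intros Hd. unfold odd_colour. rewrite mod_abs_self by exact Hd. simpl.
  apply Z.ltb_lt. nia.
Qed.

Lemma odd_colour_opp (d k : Z) :
  Z.Odd d -> k <> 0 -> odd_colour d (- k) = negb (odd_colour d k).
Proof.
  intros [j Hj] Hk. unfold odd_colour.
  pose proof (Z.mod_pos_bound k (Z.abs d) ltac:(lia)) as Hr.
  destruct (Z.eqb_spec (k mod Z.abs d) 0) as [H0|H0].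
  - rewrite Z_mod_zero_opp_full by exact H0. simpl.
    assert (k * d <> 0) by (apply Z.neq_mul_0; lia).
    destruct (Z.ltb_spec 0 (- k * d)), (Z.ltb_spec 0 (k * d)); simpl; lia.
  - rewrite Z_mod_nz_opp_full by exact H0.
    destruct (Z.eqb_spec (Z.abs d - k mod Z.abs d) 0); [lia|].
    destruct (Z.ltb_spec (2 * (Z.abs d - k mod Z.abs d)) (Z.abs d)),
             (Z.ltb_spec (2 * (k mod Z.abs d)) (Z.abs d)); simpl; lia.
Qed.

Lemma odd_colour_sub (d k : Z) :
  d <> 0 -> k <> 0 -> k <> d -> odd_colour d (k - d) = odd_colour d k.
Proof.
  intros Hd Hk Hkd. unfold odd_colour.
  assert (Hmod : (k - d) mod Z.abs d = k mod Z.abs d).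
  { rewrite Zminus_mod, mod_abs_self, Z.sub_0_r, Z.mod_mod; lia. }
  rewrite Hmod. destruct (Z.eqb_spec (k mod Z.abs d) 0) as [H0|]; [|reflexivity].
  apply Z.mod_divide in H0; [|lia]. rewrite Z.divide_abs_l in H0.
  destruct H0 as [q ->]. assert (q <> 1) by (intros ->; lia).
  assert (0 < d * d) by nia.
  destruct (Z.ltb_spec 0 ((q * d - d) * d)), (Z.ltb_spec 0 (q * d * d)); nia.
Qed.

Lemma odd_colour_reflect (d k : Z) :
  Z.Odd d -> k <> 0 -> k <> d -> odd_colour d (d - k) = negb (odd_colour d k).
Proof.
  intros Hd Hk Hkd. assert (d <> 0) by (destruct Hd; lia).
  replace (d - k) with (- (k - d)) by ring.
  rewrite odd_colour_opp, odd_colour_sub by (auto; lia). reflexivity.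
Qed.

Definition candidate (a d : Z) (p : Z * Z) : Prop :=
  p = (a, 0) \/ p = (0, 0) \/
  (inB p /\ Z.max (fst p) (fst p + snd p) < a /\ snd p = d).

Definition candidate_part (a d : Z) (p : Z * Z) : Prop :=
  if snd p =? 0 then fst p = a else odd_colour d (snd p) = true.

Lemma candidate_avoidable (a d : Z) : 1 <= a -> Z.Odd d -> avoidable (candidate a d).
Proof.
  intros Ha Hd. assert (Hd0 : d <> 0) by (destruct Hd; lia).
  split.
  { intros p [->|[->|[Hp _]]]; [unfold inB; simpl; lia..|exact Hp]. }
  exists (candidate_part a d).
  intros [x1 x2] [y1 y2] Hx Hy Hxy Hpart Hprod.
  unfold inB in Hx, Hy; unfold candidate_part in Hpart; simpl in *.
  unfold candidate, bmul in Hprod; simpl in Hprod.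
  assert (Hopp : x2 + y2 = 0 -> x2 <> 0 -> False).
  { intros Hsum Hx2. replace y2 with (- x2) in Hpart by lia.
    destruct (Z.eqb_spec x2 0), (Z.eqb_spec (- x2) 0); try lia.
    rewrite odd_colour_opp in Hpart by assumption.
    destruct (odd_colour d x2); simpl in Hpart; intuition discriminate. }
  destruct Hprod as [Hprod|[Hprod|(_ & Hmax & Hsum)]];
    [injection Hprod as Hfst Hsum..|].
  - destruct (Z.eq_dec x2 0); [|exact (Hopp Hsum ltac:(assumption))].
    replace y2 with 0 in * by lia. subst x2. simpl in Hpart.
    destruct (Z.eq_dec x1 a); [apply Hxy; f_equal|]; lia.
  - destruct (Z.eq_dec x2 0); [|exact (Hopp Hsum ltac:(assumption))].
    apply Hxy. f_equal; lia.
  - destruct (Z.eqb_spec x2 0), (Z.eqb_spec y2 0).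
    + lia.
    + replace y2 with d in Hpart by lia. rewrite odd_colour_self in Hpart by exact Hd0.
      assert (x1 = a) by tauto. lia.
    + replace x2 with d in Hpart by lia. rewrite odd_colour_self in Hpart by exact Hd0.
      assert (y1 = a) by tauto. lia.
    + replace x2 with (d - y2) in Hpart by lia.
      rewrite odd_colour_reflect in Hpart by (assumption || lia).
      destruct (odd_colour d y2); simpl in Hpart; intuition discriminate.
Qed.

Section Necessity.

Variables (U A : Z * Z -> Prop) (a : Z).
Hypothesis U_inB : subsetB U.
Hypothesis A_avoids : forall x y, inB x -> inB y -> x <> y -> (A x <-> A y) -> ~ U (bmul x y).
Hypothesis a_pos : 1 <= a.
Hypothesis U_a : U (a, 0).

Lemma opposite_of_product (x y p : Z * Z) :
  inB x -> inB y -> x <> y -> bmul x y = p -> U p -> ~ (A x <-> A y).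
Proof. intros Hx Hy Hxy <- Hp Hpart. exact (A_avoids x y Hx Hy Hxy Hpart Hp). Qed.

Ltac pair_arith :=
  unfold inB, bmul in *; cbn [fst snd] in *;
  first [ assumption
        | lia
        | let E := fresh in intro E; injection E; lia
        | f_equal; lia ].

Ltac opposite x y :=
  match goal with
  | Hp : U ?p |- _ =>
      assert (~ (A x <-> A y))
        by (apply (opposite_of_product x y p); [pair_arith..|exact Hp])
  end.

Lemma opposite_identity (m s : Z) :
  U (m, s) -> (m, s) <> (0, 0) -> ~ (A (m, s) <-> A (0, 0)).
Proof.
  intros Hp Hne. pose proof (U_inB _ Hp).
  opposite (m, s) (0, 0). assumption.
Qed.

Lemma product_free (x y p : Z * Z) :
  U x -> U y -> x <> (0, 0) -> y <> (0, 0) -> x <> y -> bmul x y = p -> ~ U p.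
Proof.
  intros Hx Hy Hx0 Hy0 Hxy Hxyp Hp. destruct x as [m s], y as [n t].
  pose proof (opposite_identity m s Hx Hx0).
  pose proof (opposite_identity n t Hy Hy0).
  pose proof (opposite_of_product _ _ p (U_inB _ Hx) (U_inB _ Hy) Hxy Hxyp Hp).
  tauto.
Qed.

Lemma U_max_lt (m s : Z) :
  U (m, s) -> (m, s) <> (0, 0) -> (m, s) <> (a, 0) -> Z.max m (m + s) < a.
Proof.
  intros Hp Hm0 Hma. pose proof (U_inB _ Hp).
  assert (Ha0 : (a, 0) <> (0, 0)) by pair_arith.
  destruct (Z_lt_le_dec m a), (Z_lt_le_dec (m + s) a); [lia|exfalso..];
    [ apply (product_free (a, 0) (m, s) (m, s))
    | apply (product_free (m, s) (a, 0) (m, s))..]; auto; pair_arith.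
Qed.

Lemma U_idempotents (m : Z) : U (m, 0) -> m = 0 \/ m = a.
Proof.
  intros Hp. pose proof (U_inB _ Hp).
  destruct (Z.eq_dec m 0), (Z.eq_dec m a); auto. exfalso.
  assert (Z.max m (m + 0) < a) by (apply U_max_lt; auto; pair_arith).
  apply (product_free (a, 0) (m, 0) (a, 0)); auto; pair_arith.
Qed.

Lemma U_odd (m s : Z) : U (m, s) -> s <> 0 -> Z.Odd s.
Proof.
  intros Hp Hs. pose proof (U_inB _ Hp).
  assert (Z.max m (m + s) < a) by (apply U_max_lt; auto; pair_arith).
  destruct (Z.Even_or_Odd s) as [[t ->]|]; [exfalso|assumption].
  opposite (m + t, t) (m, t).
  opposite (a + t, - t) (m + t, t).
  opposite (a + t, - t) (m, t).
  tauto.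
Qed.

Lemma U_slope_unique_le (m s m' s' : Z) :
  U (m, s) -> U (m', s') -> s <> 0 -> s' <> 0 -> m + s <= m' + s' -> s = s'.
Proof.
  intros Hp Hp' Hs Hs' Hle.
  pose proof (U_inB _ Hp); pose proof (U_inB _ Hp').
  assert (Z.max m (m + s) < a) by (apply U_max_lt; auto; pair_arith).
  assert (Z.max m' (m' + s') < a) by (apply U_max_lt; auto; pair_arith).
  destruct (U_odd m s Hp Hs), (U_odd m' s' Hp' Hs').
  destruct (Z.eq_dec s s') as [|Hss]; [assumption|exfalso].
  pose proof (opposite_identity m s Hp ltac:(pair_arith)).
  pose proof (opposite_identity m' s' Hp' ltac:(pair_arith)).
  opposite (m, s) (m', s' - s).
  opposite (a - s + s', s - s') (m', s' - s).
  opposite (a - s + s', s - s') (a, s' - s).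
  (* [(m + s', s - s')] is in [B] only when [m + s' >= 0]. *)
  destruct (Z_le_gt_dec 0 (m + s')).
  - opposite (m + s', s - s') (a, s' - s).
    opposite (m + s', s - s') (m, s').
    opposite (a + s', - s') (m, s').
    opposite (a + s', - s') (m', s').
    firstorder.
  - opposite (m + s - s', s') (Z.max 0 (s' - s), s - s').
    opposite (m + s - s', s') (a, - s').
    opposite (m', s') (a, - s').
    opposite (Z.max 0 (s' - s), s - s') (a, s' - s).
    firstorder.
Qed.

Lemma U_slope_unique (m s m' s' : Z) :
  U (m, s) -> U (m', s') -> s <> 0 -> s' <> 0 -> s = s'.
Proof.
  intros Hp Hp' Hs Hs'. destruct (Z_le_gt_dec (m + s) (m' + s')).
  - exact (U_slope_unique_le m s m' s' Hp Hp' Hs Hs' ltac:(assumption)).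
  - symmetry. exact (U_slope_unique_le m' s' m s Hp' Hp Hs' Hs ltac:(lia)).
Qed.

Lemma U_slope_nonzero (m s : Z) :
  U (m, s) -> (m, s) <> (a, 0) -> (m, s) <> (0, 0) -> s <> 0.
Proof. intros Hp Hma Hm0 ->. destruct (U_idempotents m Hp) as [->| ->]; auto. Qed.

Lemma U_sub_candidate : exists d, Z.Odd d /\ d < a /\ forall p, U p -> candidate a d p.
Proof.
  destruct (classic (exists p, U p /\ p <> (a, 0) /\ p <> (0, 0)))
    as [[[m d] (Hp & Hma & Hm0)]|Hnone].
  - pose proof (U_slope_nonzero m d Hp Hma Hm0) as Hd.
    pose proof (U_max_lt m d Hp Hm0 Hma). pose proof (U_inB _ Hp) as Hb.
    exists d. split; [exact (U_odd m d Hp Hd)|]. split; [unfold inB in Hb; simpl in Hb; lia|].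
    intros [m' s'] Hp'. unfold candidate.
    destruct (classic ((m', s') = (a, 0))) as [|Hma']; [now left|right].
    destruct (classic ((m', s') = (0, 0))) as [|Hm0']; [now left|right].
    split; [exact (U_inB _ Hp')|]. split; [exact (U_max_lt m' s' Hp' Hm0' Hma')|].
    exact (U_slope_unique m' s' m d Hp' Hp (U_slope_nonzero m' s' Hp' Hma' Hm0') Hd).
  - exists (-1). split; [exists (-1); lia|]. split; [lia|].
    intros p Hp. unfold candidate.
    destruct (classic (p = (a, 0))) as [|Hpa]; [now left|right].
    destruct (classic (p = (0, 0))) as [|Hp0]; [now left|right].
    exfalso. eauto.
Qed.

End Necessity.

Theorem proposition5p5 (U : Z * Z -> Prop) (a : Z) :
  maximal_avoidable U -> 1 <= a -> U (a, 0) ->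
  exists d : Z, Z.Odd d /\ d < a /\
    forall p : Z * Z,
      U p <->
      (p = (a, 0) \/ p = (0, 0) \/
       (inB p /\ Z.max (fst p) (fst p + snd p) < a /\ snd p = d)).
Proof.
  intros [[HUB [A HA]] Hmax] Ha HUa.
  destruct (U_sub_candidate U A a HUB HA Ha HUa) as (d & Hd & Hda & Hsub).
  exists d. split; [exact Hd|]. split; [exact Hda|].
  intros p. split; [exact (Hsub p)|].
  apply (Hmax (candidate a d)); [exact (candidate_avoidable a d Ha Hd)|].
  exact Hsub.
Qed.
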